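(* Let $L\in\mathbb{R}^{n\times n}$ be a real symmetric positive semidefinite matrix, let $U_k\in\mathbb{R}^{n\times k}$ have orthonormal columns that are eigenvectors of $L$, and let $\mathrm{span}(U_k)$ denote its column space. Let $\beta>0$, let $\mathrm{E},\mathrm{E}_{\text{model}}\in\mathbb{R}$, and set $a=\mathrm{E}-\mathrm{E}_{\text{model}}$. For $\phi,\rho\in\mathbb{R}^n$ define \[ \mathcal{L}(\phi,\rho)=\beta\,\|L\phi-\rho\|_2^2+\Big(a+\tfrac12\,\phi^\top\rho\Big)^2 . \] For $\phi\in\mathrm{span}(U_k)$ let $\rho^\star(\phi)=L\phi-t^\star(\phi)\phi$ with $t^\star(\phi)=\dfrac{a+\frac12\phi^\top L\phi}{2\beta+\frac12\|\phi\|_2^2}$ (the unique minimizer of $\rho\mapsto\mathcal{L}(\phi,\rho)$ over $\mathrm{span}(U_k)$), and define $A(\phi)=a+\tfrac12\,\phi^\top L\phi$. Then \[ \widetilde{\mathcal{L}}(\phi):=\mathcal{L}\big(\phi,\rho^\star(\phi)\big)=A(\phi)^2\,\frac{4\beta}{4\beta+\|\phi\|_2^2}\;\le\;A(\phi)^2, \] with equality if and only if $A(\phi)=0$ or $\phi=0$.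
   Context: $\mathcal{L}$ is the (squared, $L^2$) surrogate training objective combining a Poisson-equation residual $\|L\phi-\rho\|^2$ weighted by $\beta$ with a squared energy term involving the electrostatic energy $\frac12\phi^\top\rho$; $\phi$ plays the role of a potential and $\rho$ of charges on the nodes of a graph with Laplacian $L$. *)

From HB Require Import structures.
From mathcomp Require Import all_boot all_order all_algebra.
Set Implicit Arguments. Unset Strict Implicit. Unset Printing Implicit Defensive.
Import Order.TTheory GRing.Theory Num.Theory.
Local Open Scope ring_scope.

Definition dotv (R : realFieldType) (n : nat) (x y : 'cV[R]_n) : R := (x^T *m y) 0 0.
Definition sqnorm (R : realFieldType) (n : nat) (x : 'cV[R]_n) : R := dotv x x.

Definition psd (R : realFieldType) (n : nat) (L : 'M[R]_n) : Prop :=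
  L^T = L /\ forall x : 'cV[R]_n, 0 <= dotv x (L *m x).

Definition orthonormal_cols (R : realFieldType) (n k : nat) (U : 'M[R]_(n, k)) : Prop :=
  U^T *m U = 1%:M.
Definition eigen_cols (R : realFieldType) (n k : nat) (L : 'M[R]_n) (U : 'M[R]_(n, k)) : Prop :=
  forall j : 'I_k, exists lam : R, L *m col j U = lam *: col j U.

Definition in_span (R : realFieldType) (n k : nat) (U : 'M[R]_(n, k)) (x : 'cV[R]_n) : Prop :=
  exists c : 'cV[R]_k, x = U *m c.

Definition loss (R : realFieldType) (n : nat) (beta a : R) (L : 'M[R]_n) (phi rho : 'cV[R]_n) : R :=
  beta * sqnorm (L *m phi - rho) + (a + dotv phi rho / 2) ^+ 2.

Definition Aphi (R : realFieldType) (n : nat) (a : R) (L : 'M[R]_n) (phi : 'cV[R]_n) : R :=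
  a + dotv phi (L *m phi) / 2.

Definition tstar (R : realFieldType) (n : nat) (beta a : R) (L : 'M[R]_n) (phi : 'cV[R]_n) : R :=
  Aphi a L phi / (2 * beta + sqnorm phi / 2).

Definition rhostar (R : realFieldType) (n : nat) (beta a : R) (L : 'M[R]_n) (phi : 'cV[R]_n) : 'cV[R]_n :=
  L *m phi - tstar beta a L phi *: phi.

(* Write t := t*(phi),
   r := rho*(phi) and e := r - rho; the residual is L phi - rho = t phi + e,
   and the choice (2 beta + |phi|^2/2) t = A(phi) of t cancels every term
   linear in e, so that
     loss(phi, rho) = loss(phi, r) + beta |e|^2 + (phi^T e)^2 / 4.
   Hence r is the unique minimizer, even over all of R^n; it lies in span(U)
   because span(U) is L-invariant.  At rho = r the loss equals
   beta t^2 |phi|^2 + (A - t |phi|^2 / 2)^2 = A^2 * 4 beta / (4 beta + |phi|^2),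
   and the last factor is at most 1, with equality exactly when phi = 0. *)
From HB Require Import structures.
From mathcomp Require Import all_boot all_order all_algebra.
From mathcomp Require Import ring lra.
Set Implicit Arguments. Unset Strict Implicit.
Import Order.TTheory GRing.Theory Num.Theory.
Local Open Scope ring_scope.

Section InnerProduct.
Variables (R : realFieldType) (n : nat).
Implicit Types x y z : 'cV[R]_n.

Lemma dotvE x y : dotv x y = \sum_i x i 0 * y i 0.
Proof. by rewrite /dotv !mxE; apply: eq_bigr => i _; rewrite mxE. Qed.

Lemma dotvC x y : dotv x y = dotv y x.
Proof. by rewrite !dotvE; apply: eq_bigr => i _; rewrite mulrC. Qed.

Lemma dotvDr x y z : dotv x (y + z) = dotv x y + dotv x z.
Proof. by rewrite /dotv mulmxDr mxE. Qed.

Lemma dotvZr x (c : R) y : dotv x (c *: y) = c * dotv x y.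
Proof. by rewrite /dotv -scalemxAr mxE. Qed.

Lemma dotvNr x y : dotv x (- y) = - dotv x y.
Proof. by rewrite -scaleN1r dotvZr mulN1r. Qed.

Lemma dotvBr x y z : dotv x (y - z) = dotv x y - dotv x z.
Proof. by rewrite dotvDr dotvNr. Qed.

Lemma dotvDl x y z : dotv (y + z) x = dotv y x + dotv z x.
Proof. by rewrite !(dotvC _ x) dotvDr. Qed.

Lemma dotvZl x (c : R) y : dotv (c *: y) x = c * dotv y x.
Proof. by rewrite !(dotvC _ x) dotvZr. Qed.

Lemma sqnorm0 : sqnorm (0 : 'cV[R]_n) = 0.
Proof. by rewrite /sqnorm /dotv mulmx0 mxE. Qed.

Lemma sqnorm_ge0 x : 0 <= sqnorm x.
Proof. by rewrite /sqnorm dotvE; apply: sumr_ge0 => i _; rewrite -expr2 sqr_ge0. Qed.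

Lemma sqnorm_eq0 x : (sqnorm x = 0) <-> (x = 0).
Proof.
split=> [|->]; last exact: sqnorm0.
rewrite /sqnorm dotvE => /eqP; rewrite psumr_eq0 => [/allP x0|i _]; last first.
  by rewrite -expr2 sqr_ge0.
apply/matrixP => i j; rewrite (ord1 j) mxE.
by have := x0 i (mem_index_enum _); rewrite /= mulf_eq0 orbb => /eqP.
Qed.

End InnerProduct.

Section ColumnSpace.
Variables (R : realFieldType) (n k : nat) (U : 'M[R]_(n, k)).

Lemma in_spanB (x y : 'cV[R]_n) : in_span U x -> in_span U y -> in_span U (x - y).
Proof. by move=> [c ->] [d ->]; exists (c - d); rewrite mulmxBr. Qed.

Lemma in_spanZ (c : R) (x : 'cV[R]_n) : in_span U x -> in_span U (c *: x).
Proof. by move=> [d ->]; exists (c *: d); rewrite scalemxAr. Qed.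

(* L u_j = lam_j u_j, and U U^T fixes every column u_j of U because U^T U = 1. *)
Lemma mulmx_eigen_cols (L : 'M[R]_n) :
  orthonormal_cols U -> eigen_cols L U -> L *m U = U *m (U^T *m L *m U).
Proof.
move=> UtU eigU; apply/matrixP => i j.
suff colj : col j (L *m U) = col j (U *m (U^T *m L *m U)).
  by have := congr1 (fun v : 'cV_n => v i 0) colj; rewrite !mxE.
have [lam Luj] := eigU j.
rewrite !colE -!mulmxA -!colE Luj -!scalemxAr; congr (_ *: _).
by rewrite !colE !mulmxA -(mulmxA U U^T) UtU mulmx1.
Qed.

Lemma in_span_mulmx (L : 'M[R]_n) (x : 'cV[R]_n) :
  orthonormal_cols U -> eigen_cols L U -> in_span U x -> in_span U (L *m x).
Proof.
move=> UtU eigU [c ->]; exists (U^T *m L *m U *m c).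
by rewrite mulmxA mulmx_eigen_cols // -mulmxA.
Qed.

End ColumnSpace.

Section Loss.
Variables (R : realFieldType) (n : nat) (beta a : R) (L : 'M[R]_n) (phi : 'cV[R]_n).
Hypothesis beta_gt0 : 0 < beta.

Let rs := rhostar beta a L phi.

Lemma residual_rhostar : L *m phi - rs = tstar beta a L phi *: phi.
Proof. by rewrite /rs /rhostar opprB addrC subrK. Qed.

Lemma tstar_denom_neq0 : 2 * beta + sqnorm phi / 2 != 0.
Proof. by have := sqnorm_ge0 phi; have := beta_gt0 => ? ?; rewrite gt_eqF //; lra. Qed.

Lemma loss_rhostar_expansion (rho : 'cV[R]_n) :
  loss beta a L phi rho
    = loss beta a L phi rs + beta * sqnorm (rs - rho) + dotv phi (rs - rho) ^+ 2 / 4.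
Proof.
set t := tstar beta a L phi; set e := rs - rho.
have a_t : a = t * (2 * beta + sqnorm phi / 2) - dotv phi (L *m phi) / 2.
  by rewrite /t /tstar divfK ?tstar_denom_neq0 // /Aphi addrK.
have res_rho : L *m phi - rho = t *: phi + e.
  by rewrite -residual_rhostar /e addrA subrK.
have rho_e : rho = L *m phi - (t *: phi + e) by rewrite -res_rho opprB addrC subrK.
rewrite /loss res_rho residual_rhostar {1}rho_e /rs /rhostar -/t -/e.
clearbody t e; rewrite a_t /sqnorm.
by rewrite !(dotvBr, dotvDr, dotvDl, dotvZr, dotvZl) (dotvC e phi); field.
Qed.

Lemma loss_rhostar_le (rho : 'cV[R]_n) : loss beta a L phi rs <= loss beta a L phi rho.
Proof.
have := sqnorm_ge0 (rs - rho); have := sqr_ge0 (dotv phi (rs - rho)).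
by rewrite (loss_rhostar_expansion rho); have := beta_gt0 => ? ? ?; nra.
Qed.

Lemma loss_eq_rhostar (rho : 'cV[R]_n) :
  loss beta a L phi rho = loss beta a L phi rs -> rho = rs.
Proof.
have := sqnorm_ge0 (rs - rho); have := sqr_ge0 (dotv phi (rs - rho)).
rewrite (loss_rhostar_expansion rho); have := beta_gt0 => ? ? ? ?.
have /sqnorm_eq0 /eqP : sqnorm (rs - rho) = 0 by nra.
by rewrite subr_eq0 => /eqP.
Qed.

Lemma loss_rhostarE :
  loss beta a L phi rs = Aphi a L phi ^+ 2 * (4 * beta / (4 * beta + sqnorm phi)).
Proof.
have denom_neq0 : 4 * beta + sqnorm phi != 0.
  by have := sqnorm_ge0 phi; have := beta_gt0 => ? ?; rewrite gt_eqF //; lra.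
have := tstar_denom_neq0; rewrite /loss residual_rhostar /rs /rhostar /tstar.
by rewrite /sqnorm !(dotvBr, dotvZr, dotvZl) /Aphi => ?; field.
Qed.

End Loss.

Lemma shrink_le1 (R : realFieldType) (b s : R) : 0 < b -> 0 <= s -> b / (b + s) <= 1.
Proof. by move=> ? ?; rewrite ler_pdivrMr ?mul1r; lra. Qed.

Lemma shrink_eq1 (R : realFieldType) (b s : R) :
  0 < b -> 0 <= s -> b / (b + s) = 1 <-> s = 0.
Proof.
move=> ? ?; have bs_neq0 : b + s != 0 by rewrite gt_eqF //; lra.
split=> [|->]; last by rewrite addr0 divff // gt_eqF.
by move/(congr1 ( *%R^~ (b + s))); rewrite mul1r divfK //; lra.
Qed.

Lemma sqr_mul_shrink_le (R : realFieldType) (b s A : R) :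
  0 < b -> 0 <= s -> A ^+ 2 * (b / (b + s)) <= A ^+ 2.
Proof. by move=> ? ?; rewrite ler_piMr ?sqr_ge0 ?shrink_le1. Qed.

Lemma sqr_mul_shrink_eq (R : realFieldType) (b s A : R) :
  0 < b -> 0 <= s -> A ^+ 2 * (b / (b + s)) = A ^+ 2 <-> A = 0 \/ s = 0.
Proof.
move=> b_gt0 s_ge0; rewrite -(shrink_eq1 b_gt0 s_ge0); split=> [/eqP|[->|->]]; last 2 first.
- by rewrite expr0n mul0r.
- by rewrite mulr1.
rewrite -subr_eq0 -[X in _ - X]mulr1 -mulrBr mulf_eq0 sqrf_eq0 subr_eq0.
by case/orP=> /eqP; [left | right].
Qed.

Theorem theorem2 (R : realFieldType) (n k : nat) (L : 'M[R]_n) (U : 'M[R]_(n, k))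
    (beta E Emodel : R) (phi : 'cV[R]_n) :
  psd L -> orthonormal_cols U -> eigen_cols L U -> 0 < beta -> in_span U phi ->
  let a := E - Emodel in
  (* rho*(phi) is the unique minimizer of rho |-> loss(phi, rho) over span(U) *)
  (in_span U (rhostar beta a L phi) /\
   forall rho : 'cV[R]_n, in_span U rho ->
     loss beta a L phi (rhostar beta a L phi) <= loss beta a L phi rho /\
     (loss beta a L phi rho = loss beta a L phi (rhostar beta a L phi) ->
        rho = rhostar beta a L phi)) /\
  (* closed form, bound, and equality case *)
  loss beta a L phi (rhostar beta a L phi)
    = Aphi a L phi ^+ 2 * (4 * beta / (4 * beta + sqnorm phi)) /\
  loss beta a L phi (rhostar beta a L phi) <= Aphi a L phi ^+ 2 /\
  (loss beta a L phi (rhostar beta a L phi) = Aphi a L phi ^+ 2 <->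
     Aphi a L phi = 0 \/ phi = 0).
Proof.
move=> _ UtU eigU beta_gt0 phiU a.
have b_gt0 : 0 < 4 * beta by lra.
have s_ge0 := sqnorm_ge0 phi.
split; first split=> [|rho _].
- by apply: in_spanB; [exact: in_span_mulmx | exact: in_spanZ].
- by split; [exact: loss_rhostar_le | exact: loss_eq_rhostar].
rewrite loss_rhostarE // sqr_mul_shrink_eq // -sqnorm_eq0.
by split=> //; split; [exact: sqr_mul_shrink_le |].
Qed.
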